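(* Let $X\subseteq\Omega$ be club in $\Omega$ with $0\notin X$, $\Theta=\Theta_X$. Let $\alpha=\Omega\tilde\alpha>0$ (a nonzero multiple of $\Omega$) and $\beta<\Omega$ be such that $\alpha+\beta\in\hat\varepsilon_{\Omega+1}\cap\mathrm{JUMP}(X)$, and assume $\tau(\alpha)=\Omega$. Define $\theta_0=\Theta^*(\alpha+\beta)$ and $\theta_{n+1}=\Theta(\alpha[\theta_n])$. Then $(\theta_n)_{n<\omega}$ is strictly increasing with supremum $\Theta(\alpha+\beta)$.
   Context: $\Omega$ is the first uncountable ordinal; $\varepsilon_{\Omega+1}$ the least $\varepsilon>\Omega$ with $\omega^\varepsilon=\varepsilon$. Every $0<\xi<\varepsilon_{\Omega+1}$ has a unique $\Omega$-normal form $\xi=\Omega^{\alpha}\beta+\gamma$ with $0<\beta<\Omega$, $\gamma<\Omega^{\alpha}$. $C(0)=\{0\}$, $C(\Omega^\alpha\beta+\gamma)=C(\alpha)\cup C(\gamma)\cup\{\beta\}$; $\xi^*=\max C(\xi)$. For $\theta<\Omega$: $0[\theta]=1[\theta]=0$; $(\Omega^\alpha\beta+\gamma)[\theta]=\Omega^\alpha\beta+\gamma[\theta]$ if $\gamma>0$; $(\Omega^\alpha\beta)[\theta]=\Omega^\alpha\theta$ if $\beta$ is a limit; $\Omega^{\alpha+1}[\theta]=\Omega^\alpha\theta$; $(\Omega^\alpha(\beta+1))[\theta]=\Omega^\alpha\beta+(\Omega^\alpha)[\theta]$ if $\beta>0$; $\Omega^\alpha[\theta]=\Omega^{\alpha[\theta]}$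 if $\alpha$ is a limit. $\tau(0)=0$, $\tau(\zeta+1)=1$, $\tau(\Omega^\alpha\beta+\gamma)=\tau(\gamma)$ if $\gamma>0$, $\tau(\Omega^\alpha\beta)=\beta$ if $\beta$ limit, $\tau(\Omega^\alpha(\beta+1))=\tau(\alpha)$ if $\alpha$ limit, $\tau(\Omega^{\alpha+1}(\beta+1))=\Omega$. $\Theta_X(\xi)$ is the least $\theta\in X$ with $\theta>\xi^*$ such that all $\zeta<\xi$ with $\zeta^*<\theta$ have $\Theta_X(\zeta)<\theta$. $\Omega_0=1$, $\Omega_{n+1}=\Omega^{\Omega_n}$, $\Theta_X(\varepsilon_{\Omega+1})=\sup_n\Theta_X(\Omega_n)$, $\hat\varepsilon_{\Omega+1}=\{\xi<\varepsilon_{\Omega+1}:\xi^*<\Theta_X(\varepsilon_{\Omega+1})\}$. $\mathrm{FIX}(X)$ is the set of $\xi$ with $(\xi[1])^*<\xi^*=\tau(\xi)=\Theta_X(\gamma)$ for some $\gamma>\xi$; $\mathrm{JUMP}(X)=\{0\}\cup\{\text{successors}\}\cup\mathrm{FIX}(X)$; $\Theta^*(\xi)=\Theta_X(\zeta)$ if $\xi=\zeta+1$, $\tau(\xi)$ if $\xi\in\mathrm{FIX}(X)$, and $0$ otherwise. *)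

(* classical. Ordinals below epsilon_{Omega+1} are represented by
   Omega-normal-form terms over an abstract model of Omega = omega_1. *)
From Stdlib Require Import Classical ClassicalEpsilon Arith List.
Set Implicit Arguments.

(* A model of the first uncountable ordinal Omega: a strict well-order, total,
   uncountable, all of whose proper initial segments are countable.
   (This determines Omega up to isomorphism.) *)
Record Omega1 := mkOmega1 {
  ord :> Type;
  olt : ord -> ord -> Prop;
  ozero : ord;
  olt_trans : forall x y z, olt x y -> olt y z -> olt x z;
  olt_irrefl : forall x, ~ olt x x;
  olt_total : forall x y, olt x y \/ x = y \/ olt y x;
  olt_wf : well_founded olt;
  ozero_least : forall x, ~ olt x ozero;
  segments_countable : forall x, exists f : ord -> nat,
      forall y z, olt y x -> olt z x -> f y = f z -> y = z;
  ord_uncountable : ~ exists f : ord -> nat, forall y z, f y = f z -> y = z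
}.

(* Terms  TP a b g  stand for  Omega^a * b + g. *)
Inductive tm (A : Type) : Type :=
| TZ : tm A
| TP : tm A -> A -> tm A -> tm A.
Arguments TZ {A}.

Definition dec (P : Prop) : bool :=
  if excluded_middle_informative P then true else false.

Section Defs.
Context {W : Omega1}.
Local Notation O := (ord W).
Local Notation "x <o y" := (olt W x y) (at level 70).
Local Notation o0 := (ozero W).

Definition ole (x y : O) := x <o y \/ x = y.
Definition is_succ_of (x y : O) := x <o y /\ forall z, x <o z -> ole y z.
Definition osucc (x : O) : O := epsilon (inhabits o0) (is_succ_of x).
Definition osuccessor (y : O) := exists x, is_succ_of x y.
Definition opred (y : O) : O := epsilon (inhabits o0) (fun x => is_succ_of x y).
Definition olimit (y : O) := y <> o0 /\ ~ osuccessor y.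
Definition oone : O := osucc o0.
Definition ofinite (n : O) := forall m, ole m n -> m = o0 \/ osuccessor m.
Definition omax (x y : O) : O := if dec (x <o y) then y else x.

Fixpoint tlt (x y : tm O) : Prop :=
  match x, y with
  | TZ, TZ => False
  | TZ, TP _ _ _ => True
  | TP _ _ _, TZ => False
  | TP a b g, TP a' b' g' =>
      tlt a a' \/ (a = a' /\ (b <o b' \/ (b = b' /\ tlt g g')))
  end.

(* g < Omega^a, for g in normal form *)
Definition below_pow (a g : tm O) : Prop :=
  match g with TZ => True | TP a' _ _ => tlt a' a end.

Fixpoint nf (x : tm O) : Prop :=
  match x with
  | TZ => True
  | TP a b g => nf a /\ b <> o0 /\ nf g /\ below_pow a g
  end.

Fixpoint Cset (x : tm O) : list O :=
  match x with
  | TZ => o0 :: nil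
  | TP a b g => Cset a ++ Cset g ++ b :: nil
  end.
Definition star (x : tm O) : O := fold_right omax o0 (Cset x).

Definition emb (b : O) : tm O := if dec (b = o0) then TZ else TP TZ b TZ.
Definition tone : tm O := TP TZ oone TZ.
Definition tOmega : tm O := TP tone oone TZ.
Definition toO (x : tm O) : O :=
  match x with TP TZ b TZ => b | _ => o0 end.

Fixpoint tsucc (x : tm O) : tm O :=
  match x with
  | TZ => tone
  | TP a b TZ => if dec (a = TZ) then TP TZ (osucc b) TZ else TP a b tone
  | TP a b g => TP a b (tsucc g)
  end.
Definition tsuccessor (x : tm O) := exists z, nf z /\ x = tsucc z.
Definition tlimit (x : tm O) := x <> TZ /\ ~ tsuccessor x.
Definition tpred (x : tm O) : tm O :=
  epsilon (inhabits TZ) (fun z => nf z /\ x = tsucc z).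

Fixpoint tau (x : tm O) : tm O :=
  match x with
  | TZ => TZ
  | TP a b g =>
    match g with
    | TP _ _ _ => tau g
    | TZ =>
      if dec (tsuccessor x) then tone
      else if dec (olimit b) then emb b
      else if dec (tlimit a) then tau a               (* tau(Omega^a (b+1)) = tau(a) *)
      else tOmega                                     (* tau(Omega^(a+1)(b+1)) = Omega *)
    end
  end.

Definition mon (a : tm O) (t : O) : tm O :=
  if dec (t = o0) then TZ else TP a t TZ.

Fixpoint fs (x : tm O) (t : O) : tm O :=
  match x with
  | TZ => TZ
  | TP a b g =>
    match g with
    | TP _ _ _ => TP a b (fs g t)
    | TZ =>
      let pw :=  (* Omega^a [t] *)
        if dec (a = TZ) then TZ
        else if dec (tsuccessor a) then mon (tpred a) t
        else TP (fs a t) oone TZ in                      (* Omega^a[t] = Omega^(a[t]) *)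
      if dec (olimit b) then mon a t
      else if dec (opred b = o0) then pw
      else TP a (opred b) pw                             (* Omega^a b' + Omega^a[t] *)
    end
  end.

Fixpoint Omn (n : nat) : tm O :=
  match n with 0 => tone | S m => TP (Omn m) oone TZ end.

(* Omega * x, computed termwise: Omega * (sum Omega^a_i b_i) = sum Omega^(1+a_i) b_i *)
Definition one_plus (e : tm O) : tm O :=
  match e with
  | TZ => tone
  | TP TZ n TZ => if dec (ofinite n) then TP TZ (osucc n) TZ else e
  | _ => e
  end.
Fixpoint tOmul (x : tm O) : tm O :=
  match x with TZ => TZ | TP a b g => TP (one_plus a) b (tOmul g) end.

(* x + b for b < Omega, where x is a multiple of Omega (last exponent > 0):
   the Omega-normal form is obtained by appending the term b. *)
Fixpoint tadd_small (x : tm O) (b : O) : tm O :=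
  match x with TZ => emb b | TP a c g => TP a c (tadd_small g b) end.

Definition club (X : O -> Prop) :=
  (forall z, exists x, X x /\ z <o x) /\
  (forall y, olimit y ->
     (forall z, z <o y -> exists x, X x /\ z <o x /\ x <o y) -> X y).

Definition Theta_cond (X : O -> Prop) (Th : tm O -> O) (xi : tm O) (th : O) :=
  X th /\ star xi <o th /\
  (forall z, nf z -> tlt z xi -> star z <o th -> Th z <o th).
Definition is_Theta (X : O -> Prop) (Th : tm O -> O) :=
  forall xi, nf xi ->
    Theta_cond X Th xi (Th xi) /\
    (forall th, Theta_cond X Th xi th -> ole (Th xi) th).

(* xi in hat-epsilon_{Omega+1}: xi^* < Theta(eps_{Omega+1}) = sup_n Theta(Omega_n) *)
Definition epshat (Th : tm O -> O) (xi : tm O) :=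
  nf xi /\ exists n, star xi <o Th (Omn n).

Definition FIX (Th : tm O -> O) (xi : tm O) :=
  nf xi /\ star (fs xi oone) <o star xi /\ emb (star xi) = tau xi /\
  exists g, nf g /\ tlt xi g /\ tau xi = emb (Th g).

Definition JUMP (Th : tm O -> O) (xi : tm O) :=
  xi = TZ \/ tsuccessor xi \/ FIX Th xi.

Definition ThetaStar (Th : tm O -> O) (xi : tm O) : O :=
  if dec (tsuccessor xi) then Th (tpred xi)
  else if dec (FIX Th xi) then toO (tau xi)
  else o0.

Fixpoint theta_seq (Th : tm O -> O) (alpha : tm O) (beta : O) (n : nat) : O :=
  match n with
  | 0 => ThetaStar Th (tadd_small alpha beta)
  | S m => Th (fs alpha (theta_seq Th alpha beta m))
  end.

End Defs.

From Stdlib Require Import Classical ClassicalEpsilon Arith List.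

(* Since tau(alpha) = Omega, theta is a coefficient of alpha[theta], so
   theta_{n+1} = Theta(alpha[theta_n]) > (alpha[theta_n])^* >= theta_n; and as
   alpha[theta_n] < alpha+beta has all coefficients below Theta(alpha+beta), also
   theta_{n+1} < Theta(alpha+beta).  Conversely, the supremum lambda of the theta_n
   lies in X (X is club) and satisfies the condition defining Theta(alpha+beta),
   so Theta(alpha+beta) <= lambda.  Indeed, a zeta < alpha with zeta^* < theta_n
   lies below alpha[theta_n], hence Theta(zeta) < theta_{n+1}; and
   Theta(alpha+gamma) <= theta_0 for gamma < beta: in the successor case by
   minimality of Theta(alpha+beta-1) = theta_0, in the FIX case because
   theta_0 = (alpha+beta)^* = Theta(g) for some g > alpha+beta. *)

Lemma dec_spec (P : Prop) : (P /\ dec P = true) \/ (~ P /\ dec P = false).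
Proof. unfold dec; destruct (excluded_middle_informative P); auto. Qed.

Ltac case_dec P H := let E := fresh "E" in
  destruct (dec_spec P) as [[H E]|[H E]]; rewrite ?E in *; clear E.

Section CountableOrdinals.
Context {W : Omega1}.
Local Notation O := (ord W).
Local Notation "x <o y" := (olt W x y) (at level 70).
Local Notation o0 := (ozero W).

Lemma olt_le_trans {x y z : O} : x <o y -> ole y z -> x <o z.
Proof. intros H [H2| <-]; [exact (olt_trans W _ _ _ H H2)|exact H]. Qed.

Lemma ole_lt_trans {x y z : O} : ole x y -> y <o z -> x <o z.
Proof. intros [H| ->] H2; [exact (olt_trans W _ _ _ H H2)|exact H2]. Qed.

Lemma ole_trans {x y z : O} : ole x y -> ole y z -> ole x z.
Proof. intros [H| ->] H2; [left; exact (olt_le_trans H H2)|exact H2]. Qed.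

Lemma not_olt_ole {x y : O} : ~ x <o y -> ole y x.
Proof.
  intros H. destruct (olt_total W x y) as [h|[h|h]]; [tauto|right; auto|left; auto].
Qed.

Lemma ole_0 (x : O) : ole o0 x.
Proof. apply not_olt_ole, ozero_least. Qed.

Lemma olt_neq_0 {x y : O} : x <o y -> y <> o0.
Proof. intros H ->. exact (ozero_least W _ H). Qed.

Lemma olt_wf_min (P : O -> Prop) :
  (exists x, P x) -> exists m, P m /\ forall z, P z -> ~ z <o m.
Proof.
  intros [x Hx]. apply NNPP; intro Hn.
  assert (Hall : forall y, ~ P y).
  { intro y. induction y as [y IH] using (well_founded_ind (olt_wf W)).
    intro Py. apply Hn. exists y. split; [exact Py|]. intros z Pz Hz. exact (IH z Hz Pz). }
  exact (Hall x Hx).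
Qed.

Lemma olt_unbounded (x : O) : exists y, x <o y.
Proof.
  (* otherwise W = [0, x] would be countable *)
  apply NNPP; intro Hn.
  assert (Hle : forall y, y <> x -> y <o x).
  { intros y Hy. destruct (olt_total W y x) as [h|[h|h]]; [exact h|contradiction|].
    exfalso. apply Hn. exists y. exact h. }
  destruct (segments_countable W x) as [f Hf].
  apply (ord_uncountable W).
  exists (fun y => if dec (y = x) then 0 else S (f y)).
  intros y z. case_dec (y = x) Hy; case_dec (z = x) Hz; intros E; try congruence.
  injection E; intro Efyz. apply Hf; auto.
Qed.

Lemma osucc_spec (x : O) : is_succ_of x (osucc x).
Proof.
  unfold osucc. apply epsilon_spec.
  destruct (olt_wf_min (fun y => x <o y) (olt_unbounded x)) as [m [H1 H2]].
  exists m. split; [exact H1|]. intros z Hz. apply not_olt_ole. intro. eapply H2; eauto.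
Qed.

Lemma olt_osucc (x : O) : x <o osucc x.
Proof. apply osucc_spec. Qed.

Lemma is_succ_of_unique {x y z : O} : is_succ_of x y -> is_succ_of x z -> y = z.
Proof.
  intros [H1 H2] [H3 H4]. destruct (H2 z H3) as [h|h]; [|exact h].
  destruct (H4 y H1) as [h'|h']; [|auto].
  exfalso. exact (olt_irrefl W _ (olt_trans W _ _ _ h h')).
Qed.

Lemma is_succ_of_le {p b x : O} : is_succ_of p b -> x <o b -> ole x p.
Proof.
  intros [H1 H2] Hx. apply not_olt_ole. intro Hp.
  exact (olt_irrefl W _ (olt_le_trans Hx (H2 x Hp))).
Qed.

Lemma oone_le {b : O} : b <> o0 -> ole oone b.
Proof.
  intro H. apply (proj2 (osucc_spec o0)).
  destruct (olt_total W o0 b) as [h|[h|h]]; [exact h|congruence|].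
  exfalso. exact (ozero_least W _ h).
Qed.

Lemma opred_spec {b : O} : b <> o0 -> ~ olimit b -> is_succ_of (opred b) b.
Proof.
  intros H1 H2. unfold opred. apply epsilon_spec.
  apply NNPP; intro H3. apply H2. split; [exact H1|exact H3].
Qed.

Lemma olub_exists {f : nat -> O} {y : O} : (forall n, ole (f n) y) ->
  exists l, (forall n, ole (f n) l) /\ ole l y /\ (forall z, z <o l -> exists n, z <o f n).
Proof.
  intro Hy.
  destruct (olt_wf_min (fun l => forall n, ole (f n) l) (ex_intro _ y Hy)) as [l [Hl Hmin]].
  exists l. split; [exact Hl|split].
  - apply not_olt_ole. intro H. exact (Hmin y Hy H).
  - intros z Hz. apply NNPP. intro H. apply (Hmin z); [|exact Hz].
    intro n. apply not_olt_ole. intro H2. apply H. exists n. exact H2.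
Qed.

Lemma club_sup {X : O -> Prop} {f : nat -> O} {l : O} : club X ->
  (forall n, X (f n)) -> (forall n, f n <o l) ->
  (forall z, z <o l -> exists n, z <o f n) -> X l.
Proof.
  intros [_ Hclosed] HX Hlt Hcof. apply Hclosed.
  - split; [exact (olt_neq_0 (Hlt 0))|]. intros [p [Hp Hleast]].
    destruct (Hcof p Hp) as [n Hn].
    exact (olt_irrefl W _ (olt_le_trans (Hlt n) (Hleast _ Hn))).
  - intros z Hz. destruct (Hcof z Hz) as [n Hn]. exists (f n). auto.
Qed.

End CountableOrdinals.

Section NormalForms.
Context {W : Omega1}.
Local Notation O := (ord W).
Local Notation "x <o y" := (olt W x y) (at level 70).
Local Notation o0 := (ozero W).

Lemma not_tlt_TZ (x : tm O) : ~ tlt x TZ.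
Proof. destruct x; simpl; auto. Qed.

Lemma tlt_trans {x y z : tm O} : tlt x y -> tlt y z -> tlt x z.
Proof.
  revert y z. induction x as [|a IHa b g IHg]; intros y z H1 H2;
  destruct y as [|a' b' g']; destruct z as [|a'' b'' g'']; simpl in *; auto; try tauto.
  destruct H1 as [H1|[E1 [H1|[E1' H1]]]]; destruct H2 as [H2|[E2 [H2|[E2' H2]]]]; subst;
  first [ left; eauto; fail
        | right; split; [reflexivity|];
          first [ left; eapply (olt_trans W); eauto; fail | left; eauto; fail
                | right; split; eauto ] ].
Qed.

Lemma omax_lt_iff (x y th : O) : omax x y <o th <-> x <o th /\ y <o th.
Proof.
  unfold omax. case_dec (x <o y) Hxy; split; intros H; try tauto.
  - split; [exact (olt_trans W _ _ _ Hxy H)|exact H].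
  - split; [exact H|exact (ole_lt_trans (not_olt_ole Hxy) H)].
Qed.

Lemma star_lt_iff (x : tm O) (th : O) :
  star x <o th <-> o0 <o th /\ Forall (fun c => c <o th) (Cset x).
Proof.
  unfold star. induction (Cset x) as [|c l IH]; simpl.
  - split; [intro H; split; auto|tauto].
  - rewrite omax_lt_iff, IH, Forall_cons_iff. tauto.
Qed.

Lemma star_TZ_lt (th : O) : star (@TZ O) <o th <-> o0 <o th.
Proof. rewrite star_lt_iff; simpl. rewrite Forall_cons_iff. split; intuition. Qed.

Lemma star_TP_lt (a g : tm O) (b th : O) :
  star (TP a b g) <o th <-> star a <o th /\ star g <o th /\ b <o th.
Proof.
  rewrite !star_lt_iff; simpl. rewrite !Forall_app, Forall_cons_iff. intuition.
Qed.

Lemma tsucc_neq_TZ (y : tm O) : tsucc y <> TZ.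
Proof.
  destruct y as [|a b g]; simpl; [discriminate|].
  destruct g; [case_dec (a = TZ) Ha|]; discriminate.
Qed.

Lemma tlt_tsucc (y : tm O) : tlt y (tsucc y).
Proof.
  induction y as [|a IHa b g IHg]; simpl; auto.
  destruct g as [|a2 b2 g2].
  - case_dec (a = TZ) Ha; simpl.
    + subst. right; split; [reflexivity|left; apply olt_osucc].
    + right; split; auto.
  - right; split; auto.
Qed.

Lemma tlt_tone_inv {x : tm O} : nf x -> tlt x tone -> x = TZ.
Proof.
  destruct x as [|a b g]; [reflexivity|]. simpl. intros (Ha & Hb & Hg & Hbp) H.
  destruct H as [H|[-> [H|[-> H]]]];
    [destruct a; simpl in H; tauto| |destruct g; simpl in H; tauto].
  exfalso. destruct (is_succ_of_le (osucc_spec o0) H) as [h|h];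
    [exact (ozero_least W _ h)|exact (Hb h)].
Qed.

Lemma tlt_tsucc_inv {x y : tm O} : nf x -> tlt x (tsucc y) -> x = y \/ tlt x y.
Proof.
  revert x. induction y as [|a IHa b g IHg]; intros x Hx H.
  - left. exact (tlt_tone_inv Hx H).
  - destruct x as [|a' b' g']; [right; simpl; auto|].
    destruct Hx as (Ha' & Hb' & Hg' & Hbp'). simpl in H.
    destruct g as [|a2 b2 g2].
    + case_dec (a = TZ) Ha; simpl in H.
      * subst. destruct H as [H|[-> [H|[-> H]]]];
          [destruct a'; simpl in H; tauto| |destruct g'; simpl in H; tauto].
        destruct (is_succ_of_le (osucc_spec b) H) as [h|h]; [right; simpl; auto|].
        subst. left. destruct g' as [|a3 b3 g3]; [reflexivity|].
        simpl in Hbp'. destruct a3; simpl in Hbp'; tauto.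
      * destruct H as [H|[-> [H|[-> H]]]]; [right; simpl; auto|right; simpl; auto|].
        left. rewrite (tlt_tone_inv Hg' H). reflexivity.
    + destruct H as [H|[-> [H|[-> H]]]]; [right; simpl; auto|right; simpl; auto|].
      destruct (IHg g' Hg' H) as [h|h]; [left; subst; auto|right; simpl; auto].
Qed.

Lemma star_tsucc_lt {z : tm O} {th : O} : star (tsucc z) <o th -> star z <o th.
Proof.
  induction z as [|a IHa b g IHg]; simpl; intro H.
  - apply star_TP_lt in H. tauto.
  - destruct g as [|a2 b2 g2].
    + case_dec (a = TZ) Ha; rewrite star_TP_lt in *.
      * subst. split; [tauto|split; [tauto|]].
        exact (olt_trans W _ _ _ (olt_osucc b) (proj2 (proj2 H))).
      * split; [tauto|split; [|tauto]].
        apply star_TZ_lt. exact (ole_lt_trans (ole_0 _) (proj1 H)).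
    + rewrite star_TP_lt in H |- *. destruct H as (H1 & H2 & H3).
      split; [exact H1|split; [exact (IHg H2)|exact H3]].
Qed.

Lemma tpred_spec {a : tm O} : tsuccessor a -> nf (tpred a) /\ a = tsucc (tpred a).
Proof. intro H. unfold tpred. apply epsilon_spec. exact H. Qed.

Lemma tpred_lt {a : tm O} : tsuccessor a -> tlt (tpred a) a.
Proof. intro H. destruct (tpred_spec H) as [_ E]. rewrite E at 2. apply tlt_tsucc. Qed.

Lemma toO_emb (s : O) : toO (emb s) = s.
Proof. unfold emb. case_dec (s = o0) Hs; simpl; auto. Qed.

Lemma emb_inj {x y : O} : emb x = emb y -> x = y.
Proof. intro H. rewrite <- (toO_emb x), <- (toO_emb y), H. reflexivity. Qed.

Lemma emb_neq_tOmega (b : O) : emb b <> tOmega.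
Proof.
  unfold emb. case_dec (b = o0) Hb; [discriminate|].
  intro E; injection E; intros; discriminate.
Qed.

Lemma tone_neq_tOmega : (tone : tm O) <> tOmega.
Proof. intro E; injection E; intros; discriminate. Qed.

Lemma tau_const_neq_tOmega {b : O} : b <> o0 -> tau (TP TZ b TZ) <> tOmega.
Proof.
  intros Hb. simpl.
  case_dec (tsuccessor (TP TZ b (@TZ O))) Hs; [apply tone_neq_tOmega|].
  case_dec (olimit b) Hl; [apply emb_neq_tOmega|].
  case_dec (tlimit (@TZ O)) Hlim; [destruct Hlim; congruence|].
  exfalso. apply Hs.
  assert (Hp : osuccessor b) by (apply NNPP; intro H; apply Hl; split; assumption).
  destruct Hp as [p Hp].
  case_dec (p = o0) Hp0.
  - subst. exists TZ. split; [exact I|]. simpl. unfold tone, oone. f_equal.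
    exact (is_succ_of_unique Hp (osucc_spec o0)).
  - exists (TP TZ p TZ). split; [simpl; auto|]. simpl.
    case_dec (@TZ O = TZ) Hz; [|congruence].
    f_equal. exact (is_succ_of_unique Hp (osucc_spec p)).
Qed.

Lemma tau_monomial_eq_tOmega {a : tm O} {b : O} :
  nf (TP a b TZ) -> tau (TP a b TZ) = tOmega ->
  nf a /\ b <> o0 /\ ~ olimit b /\ a <> TZ /\ is_succ_of (opred b) b /\
  (tsuccessor a \/ (~ tsuccessor a /\ tau a = tOmega)).
Proof.
  intros (Hna & Hb & _ & _) Ht.
  assert (Ha : a <> TZ) by (intros ->; exact (tau_const_neq_tOmega Hb Ht)).
  revert Ht. simpl. case_dec (tsuccessor (TP a b (@TZ O))) Hs; intro Ht.
  { exfalso. exact (tone_neq_tOmega Ht). }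
  case_dec (olimit b) Hl; [exfalso; exact (emb_neq_tOmega _ Ht)|].
  do 4 (split; [assumption|]). split; [exact (opred_spec Hb Hl)|].
  case_dec (tlimit a) Hlim.
  - right. exact (conj (proj2 Hlim) Ht).
  - left. apply NNPP. intro Hns. exact (Hlim (conj Ha Hns)).
Qed.

End NormalForms.

Section SmallSummands.
Context {W : Omega1}.
Local Notation O := (ord W).
Local Notation "x <o y" := (olt W x y) (at level 70).
Local Notation o0 := (ozero W).

Fixpoint Omega_multiple (x : tm O) : Prop :=
  match x with TZ => True | TP a _ g => a <> TZ /\ Omega_multiple g end.

Lemma Omega_multiple_tOmul (x : tm O) : Omega_multiple (tOmul x).
Proof.
  induction x as [|a _ b g IHg]; simpl; [exact I|]. split; [|exact IHg].
  destruct a as [|a' n g']; simpl; [discriminate|].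
  destruct a'; [|discriminate]. destruct g'; [|discriminate].
  case_dec (ofinite n) Hn; discriminate.
Qed.

Lemma tadd_small_0 (x : tm O) : tadd_small x o0 = x.
Proof.
  induction x as [|a _ c y IH]; simpl.
  - unfold emb. case_dec (o0 = o0) H; congruence.
  - congruence.
Qed.

Lemma tadd_small_neq_TZ {x : tm O} (b : O) : x <> TZ -> tadd_small x b <> TZ.
Proof. destruct x; simpl; congruence. Qed.

Lemma tadd_small_lt (x : tm O) {g b : O} : g <o b -> tlt (tadd_small x g) (tadd_small x b).
Proof.
  intro H. induction x as [|a _ c y IH]; simpl.
  - unfold emb. case_dec (g = o0) Hg; case_dec (b = o0) Hb; simpl; auto;
      subst; exfalso; exact (ozero_least W _ H).
  - right; split; auto.
Qed.

Lemma tlt_tadd_small_r {z x : tm O} (b : O) : tlt z x -> tlt z (tadd_small x b).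
Proof.
  intro H. case_dec (b = o0) Hb; [subst; rewrite tadd_small_0; exact H|].
  rewrite <- (tadd_small_0 x) in H. apply (tlt_trans H), tadd_small_lt.
  destruct (ole_0 b) as [h|h]; [exact h|congruence].
Qed.

Lemma star_tadd_small_lt (x : tm O) (b th : O) :
  star (tadd_small x b) <o th <-> star x <o th /\ b <o th.
Proof.
  induction x as [|a _ c y IH]; simpl.
  - unfold emb. case_dec (b = o0) Hb.
    + subst. rewrite star_TZ_lt. tauto.
    + rewrite star_TP_lt, !star_TZ_lt. tauto.
  - rewrite !star_TP_lt, IH. tauto.
Qed.

Lemma nf_tadd_small_inv {x : tm O} {b : O} : nf (tadd_small x b) -> nf x.
Proof.
  induction x as [|a _ c y IH]; simpl; [auto|]. intros (H1 & H2 & H3 & H4).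
  repeat split; auto. destruct y; simpl in *; auto.
Qed.

Lemma tlt_tadd_small_inv {x z : tm O} {b : O} :
  nf z -> tlt z (tadd_small x b) -> ~ tlt z x -> exists g, g <o b /\ z = tadd_small x g.
Proof.
  revert z. induction x as [|a _ c y IH]; intros z Hz H1 H2; simpl in *.
  - unfold emb in H1. case_dec (b = o0) Hb; [exfalso; exact (not_tlt_TZ _ H1)|].
    destruct z as [|a' b' g'].
    + exists o0. split; [destruct (ole_0 b); [assumption|congruence]|].
      simpl. unfold emb. case_dec (@ozero W = o0) H; congruence.
    + simpl in H1. destruct H1 as [H|[-> [H|[-> H]]]];
        [destruct a'; simpl in H; tauto| |destruct g'; simpl in H; tauto].
      exists b'. split; [exact H|]. simpl. unfold emb.
      case_dec (b' = o0) Hb'; [exfalso; exact (proj1 (proj2 Hz) Hb')|].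
      f_equal. destruct Hz as (_ & _ & _ & Hbp). destruct g' as [|a3 b3 g3]; [reflexivity|].
      simpl in Hbp. destruct a3; simpl in Hbp; tauto.
  - destruct z as [|a' b' g']; [exfalso; apply H2; simpl; auto|].
    simpl in H1. destruct H1 as [H|[-> [H|[-> H]]]];
      [exfalso; apply H2; simpl; auto|exfalso; apply H2; simpl; auto|].
    destruct (IH g') as [gg [Hg E]]; [apply Hz|exact H|intro H3; apply H2; simpl; auto|].
    exists gg. split; [exact Hg|]. simpl. congruence.
Qed.

Lemma tadd_small_tsucc_inv {x z : tm O} {b : O} :
  Omega_multiple x -> nf z -> tadd_small x b = tsucc z ->
  exists b', is_succ_of b' b /\ z = tadd_small x b'.
Proof.
  revert z. induction x as [|a _ c y IH]; intros z Hx Hz E; simpl in *.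
  - unfold emb in E. case_dec (b = o0) Hb; [exfalso; exact (tsucc_neq_TZ z (eq_sym E))|].
    destruct z as [|a' b' g'].
    + simpl in E. injection E; intros; subst. exists o0. split; [apply osucc_spec|].
      simpl. unfold emb. case_dec (@ozero W = o0) H; congruence.
    + destruct g' as [|a2 b2 g2].
      * simpl in E. case_dec (a' = TZ) Ha'.
        -- subst. injection E; intros; subst. exists b'. split; [apply osucc_spec|].
           simpl. unfold emb. case_dec (b' = o0) Hb'; [exfalso; exact (proj1 (proj2 Hz) Hb')|].
           reflexivity.
        -- injection E; intros; subst. congruence.
      * simpl in E. injection E; intros H _ _.
        exfalso. exact (tsucc_neq_TZ (TP a2 b2 g2) (eq_sym H)).
  - destruct Hx as [Ha Hy]. destruct z as [|a' b' g'].
    + simpl in E. injection E; intros; subst; congruence.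
    + destruct g' as [|a2 b2 g2].
      * simpl in E. case_dec (a' = TZ) Ha'.
        -- injection E; intros; subst; congruence.
        -- injection E; intros; subst.
           destruct (IH TZ) as [bb [H1 H2]]; [exact Hy|exact I|exact H|].
           exists bb. split; [exact H1|]. simpl. congruence.
      * simpl in E. injection E; intros; subst.
        destruct (IH (TP a2 b2 g2)) as [bb [H1 H2]]; [exact Hy|apply Hz|assumption|].
        exists bb. split; [exact H1|]. simpl. congruence.
Qed.

Lemma fs_tadd_small (x : tm O) {b : O} (t : O) :
  b <> o0 -> exists d, fs (tadd_small x b) t = tadd_small x d.
Proof.
  intro Hb. induction x as [|a _ c y IH]; simpl.
  - unfold emb. case_dec (b = o0) Hb'; [congruence|]. simpl.
    case_dec (olimit b) Hl; [exists t; reflexivity|].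
    case_dec (@TZ O = TZ) Hz; [|congruence].
    case_dec (opred b = o0) Hp.
    + exists o0. simpl. unfold emb. case_dec (@ozero W = o0) H; congruence.
    + exists (opred b). simpl. unfold emb. case_dec (opred b = o0) H; congruence.
  - destruct IH as [d Hd]. exists d. simpl.
    destruct (tadd_small y b) eqn:E; [|congruence].
    exfalso. destruct y; simpl in E; [unfold emb in E; case_dec (b = o0) H|]; congruence.
Qed.

End SmallSummands.

Section FundamentalSequences.
Context {W : Omega1}.
Local Notation O := (ord W).
Local Notation "x <o y" := (olt W x y) (at level 70).
Local Notation o0 := (ozero W).

Definition fs_pow (a : tm O) (t : O) : tm O :=
  if dec (a = TZ) then TZ
  else if dec (tsuccessor a) then mon (tpred a) t
  else TP (fs a t) oone TZ.

Lemma fs_monomial (a : tm O) (b t : O) : fs (TP a b TZ) t =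
  if dec (olimit b) then mon a t
  else if dec (opred b = o0) then fs_pow a t
  else TP a (opred b) (fs_pow a t).
Proof. reflexivity. Qed.

Lemma fs_pow_cases {a : tm O} (t : O) : a <> TZ ->
  (tsuccessor a /\ fs_pow a t = mon (tpred a) t) \/
  (~ tsuccessor a /\ fs_pow a t = TP (fs a t) oone TZ).
Proof.
  intro H. unfold fs_pow. case_dec (a = TZ) Ha; [congruence|].
  case_dec (tsuccessor a) Hs; auto.
Qed.

Lemma fs_lt {x : tm O} (t : O) : nf x -> tau x = tOmega -> tlt (fs x t) x.
Proof.
  induction x as [|a IHa b g IHg]; intros Hn Ht; [discriminate|].
  destruct g as [|a2 b2 g2].
  - destruct (tau_monomial_eq_tOmega Hn Ht) as (Hna & Hb & Hl & Ha & Hp & Hs).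
    assert (Hpw : tlt (fs_pow a t) (TP a b TZ)).
    { destruct (fs_pow_cases t Ha) as [[Hsa ->]|[Hsa ->]].
      - unfold mon. case_dec (t = o0) Ht0; simpl; auto. left. exact (tpred_lt Hsa).
      - simpl. left. destruct Hs as [Hs|[_ Hta]]; [contradiction|]. exact (IHa Hna Hta). }
    rewrite fs_monomial. case_dec (olimit b) Hl'; [contradiction|].
    case_dec (opred b = o0) Hp0; [exact Hpw|].
    simpl. right; split; [reflexivity|left; apply Hp].
  - change (tlt (TP a b (fs (TP a2 b2 g2) t)) (TP a b (TP a2 b2 g2))).
    simpl. right; split; [reflexivity|]. right; split; [reflexivity|].
    apply IHg; [apply Hn|exact Ht].
Qed.

Lemma fs_below (a : tm O) {g : tm O} (t : O) :
  nf g -> tau g = tOmega -> below_pow a g -> below_pow a (fs g t).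
Proof.
  intros Hn Ht Hb. destruct g as [|a3 b3 g3]; [discriminate|]. simpl in Hb.
  destruct g3 as [|a4 b4 g4]; [|exact Hb].
  destruct (tau_monomial_eq_tOmega Hn Ht) as (Hna & Hb3 & Hl & Ha & Hp & Hs).
  assert (Hpw : below_pow a (fs_pow a3 t)).
  { destruct (fs_pow_cases t Ha) as [[Hsa ->]|[Hsa ->]].
    - unfold mon. case_dec (t = o0) Ht0; simpl; auto. exact (tlt_trans (tpred_lt Hsa) Hb).
    - simpl. destruct Hs as [Hs|[_ Hta]]; [contradiction|]. exact (tlt_trans (fs_lt t Hna Hta) Hb). }
  rewrite fs_monomial. case_dec (olimit b3) Hl'; [contradiction|].
  case_dec (opred b3 = o0) Hp0; [exact Hpw|exact Hb].
Qed.

Lemma nf_fs {x : tm O} (t : O) : nf x -> tau x = tOmega -> nf (fs x t).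
Proof.
  induction x as [|a IHa b g IHg]; intros Hn Ht; [discriminate|].
  destruct g as [|a2 b2 g2].
  - destruct (tau_monomial_eq_tOmega Hn Ht) as (Hna & Hb & Hl & Ha & Hp & Hs).
    assert (Hpw : nf (fs_pow a t) /\ below_pow a (fs_pow a t)).
    { destruct (fs_pow_cases t Ha) as [[Hsa ->]|[Hsa ->]].
      - unfold mon. case_dec (t = o0) Ht0; simpl; auto.
        split; [|exact (tpred_lt Hsa)]. repeat split; auto. apply (tpred_spec Hsa).
      - destruct Hs as [Hs|[_ Hta]]; [contradiction|]. simpl.
        split; [|exact (fs_lt t Hna Hta)]. repeat split; auto.
        exact (olt_neq_0 (olt_osucc o0)). }
    rewrite fs_monomial. case_dec (olimit b) Hl'; [contradiction|].
    case_dec (opred b = o0) Hp0; [exact (proj1 Hpw)|].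
    simpl. repeat split; tauto.
  - change (nf (TP a b (fs (TP a2 b2 g2) t))).
    destruct Hn as (H1 & H2 & H3 & H4). split; [exact H1|split; [exact H2|split]].
    + exact (IHg H3 Ht).
    + exact (fs_below a t H3 Ht H4).
Qed.

Lemma star_fs_lt {x : tm O} {t th : O} :
  nf x -> tau x = tOmega -> star x <o th -> t <o th -> star (fs x t) <o th.
Proof.
  induction x as [|a IHa b g IHg]; intros Hn Ht Hx Hth; [discriminate|].
  destruct g as [|a2 b2 g2].
  - destruct (tau_monomial_eq_tOmega Hn Ht) as (Hna & Hb & Hl & Ha & Hp & Hs).
    apply star_TP_lt in Hx as (Ha1 & Ha2 & Ha3).
    assert (Hpw : star (fs_pow a t) <o th).
    { destruct (fs_pow_cases t Ha) as [[Hsa ->]|[Hsa ->]].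
      - unfold mon. case_dec (t = o0) Ht0; [exact Ha2|].
        apply star_TP_lt. split; [|split; [exact Ha2|exact Hth]].
        apply star_tsucc_lt. rewrite <- (proj2 (tpred_spec Hsa)). exact Ha1.
      - destruct Hs as [Hs|[_ Hta]]; [contradiction|]. apply star_TP_lt.
        split; [exact (IHa Hna Hta Ha1 Hth)|].
        split; [exact Ha2|exact (ole_lt_trans (oone_le Hb) Ha3)]. }
    rewrite fs_monomial. case_dec (olimit b) Hl'; [contradiction|].
    case_dec (opred b = o0) Hp0; [exact Hpw|].
    apply star_TP_lt. split; [exact Ha1|split; [exact Hpw|]].
    exact (olt_trans W _ _ _ (proj1 Hp) Ha3).
  - change (star (TP a b (fs (TP a2 b2 g2) t)) <o th).
    apply star_TP_lt in Hx as (Ha1 & Ha2 & Ha3). apply star_TP_lt.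
    split; [exact Ha1|split; [|exact Ha3]]. apply IHg; [apply Hn|exact Ht|exact Ha2|exact Hth].
Qed.

Lemma olt_of_star_fs_lt {x : tm O} {t th : O} :
  nf x -> tau x = tOmega -> star (fs x t) <o th -> t <o th.
Proof.
  induction x as [|a IHa b g IHg]; intros Hn Ht Hx; [discriminate|].
  destruct g as [|a2 b2 g2].
  - destruct (tau_monomial_eq_tOmega Hn Ht) as (Hna & _ & Hl & Ha & _ & Hs).
    assert (Hpw : star (fs_pow a t) <o th).
    { rewrite fs_monomial in Hx. case_dec (olimit b) Hl'; [contradiction|].
      case_dec (opred b = o0) Hp0; [exact Hx|]. apply star_TP_lt in Hx. tauto. }
    destruct (fs_pow_cases t Ha) as [[_ E]|[Hsa E]]; rewrite E in Hpw.
    + unfold mon in Hpw. case_dec (t = o0) Ht0.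
      * subst. exact (ole_lt_trans (ole_0 _) Hpw).
      * apply star_TP_lt in Hpw. tauto.
    + destruct Hs as [Hs|[_ Hta]]; [contradiction|].
      apply star_TP_lt in Hpw. exact (IHa Hna Hta (proj1 Hpw)).
  - change (star (TP a b (fs (TP a2 b2 g2) t)) <o th) in Hx.
    apply star_TP_lt in Hx. apply IHg; [apply Hn|exact Ht|tauto].
Qed.

Lemma fs_cofinal {x z : tm O} {t : O} :
  nf x -> tau x = tOmega -> nf z -> tlt z x -> star z <o t -> tlt z (fs x t).
Proof.
  revert z. induction x as [|a IHa b g IHg]; intros z Hn Ht Hz Hzx Hzt; [discriminate|].
  assert (Ht0 : t <> o0) by exact (olt_neq_0 (ole_lt_trans (ole_0 _) Hzt)).
  destruct g as [|a2 b2 g2].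
  - destruct (tau_monomial_eq_tOmega Hn Ht) as (Hna & Hb & Hl & Ha & Hp & Hs).
    assert (Hpw : forall z', nf z' -> below_pow a z' -> star z' <o t -> tlt z' (fs_pow a t)).
    { intros z' Hz' Hbz' Htz'.
      destruct (fs_pow_cases t Ha) as [[Hsa ->]|[Hsa ->]].
      - unfold mon. case_dec (t = o0) Ht0'; [contradiction|].
        destruct z' as [|a3 b3 g3]; simpl; [exact I|]. simpl in Hbz'.
        rewrite (proj2 (tpred_spec Hsa)) in Hbz'. apply star_TP_lt in Htz'.
        destruct (tlt_tsucc_inv (proj1 Hz') Hbz') as [->|Hlt];
          [right; split; [reflexivity|left; tauto]|left; exact Hlt].
      - destruct Hs as [Hs|[_ Hta]]; [contradiction|].
        destruct z' as [|a3 b3 g3]; simpl; [exact I|]. simpl in Hbz'. left.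
        apply star_TP_lt in Htz'. apply IHa; [exact Hna|exact Hta|apply Hz'|exact Hbz'|tauto]. }
    rewrite fs_monomial. case_dec (olimit b) Hl'; [contradiction|].
    destruct z as [|a3 b3 g3].
    + case_dec (opred b = o0) Hp0; [apply Hpw; simpl; auto|simpl; auto].
    + simpl in Hzx. destruct Hzx as [H|[-> [H|[-> H]]]]; [| |exfalso; exact (not_tlt_TZ _ H)].
      * case_dec (opred b = o0) Hp0; [apply Hpw; simpl; auto|simpl; auto].
      * case_dec (opred b = o0) Hp0.
        -- exfalso. destruct (is_succ_of_le Hp H) as [h|h]; rewrite Hp0 in h;
             [exact (ozero_least W _ h)|exact (proj1 (proj2 Hz) h)].
        -- simpl. right; split; [reflexivity|].
           destruct (is_succ_of_le Hp H) as [h|h]; [left; exact h|right; split; [exact h|]].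
           apply star_TP_lt in Hzt. destruct Hz as (_ & _ & Hg3 & Hbp3).
           apply Hpw; tauto.
  - change (tlt z (TP a b (fs (TP a2 b2 g2) t))).
    destruct z as [|a3 b3 g3]; simpl; [exact I|]. simpl in Hzx.
    destruct Hzx as [H|[-> [H|[-> H]]]]; [left; exact H|right; split; [reflexivity|left; exact H]|].
    right; split; [reflexivity|]. right; split; [reflexivity|].
    apply star_TP_lt in Hzt.
    apply IHg; [apply Hn|exact Ht|apply Hz|exact H|tauto].
Qed.

End FundamentalSequences.

Section ThetaSequence.
Context {W : Omega1} {X : W -> Prop} {Th : tm W -> W}.
Local Notation O := (ord W).
Local Notation "x <o y" := (olt W x y) (at level 70).
Local Notation o0 := (ozero W).
Hypothesis HTh : is_Theta X Th.

Lemma X_Theta {xi : tm O} : nf xi -> X (Th xi).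
Proof. intro H. apply (HTh xi H). Qed.

Lemma star_lt_Theta {xi : tm O} : nf xi -> star xi <o Th xi.
Proof. intro H. apply (HTh xi H). Qed.

Lemma Theta_lt {xi z : tm O} : nf xi -> nf z -> tlt z xi -> star z <o Th xi -> Th z <o Th xi.
Proof. intro H. apply (HTh xi H). Qed.

Lemma Theta_le {xi : tm O} {th : O} : nf xi -> Theta_cond X Th xi th -> ole (Th xi) th.
Proof. intro H. apply (HTh xi H). Qed.

Context {alpha : tm O} {beta : O}.
Hypotheses (Hclub : club X) (Hna : nf alpha) (Hmul : Omega_multiple alpha)
  (Htau : tau alpha = tOmega) (Hnxi : nf (tadd_small alpha beta))
  (Hjump : JUMP Th (tadd_small alpha beta)).
Local Notation xi := (tadd_small alpha beta).
Local Notation theta := (theta_seq Th alpha beta).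

Lemma theta_seq_0_cases :
  (exists b', is_succ_of b' beta /\ nf (tadd_small alpha b') /\
     xi = tsucc (tadd_small alpha b') /\ theta 0 = Th (tadd_small alpha b'))
  \/ (FIX Th xi /\ beta <> o0 /\ theta 0 = star xi).
Proof.
  assert (Hsucc : tsuccessor xi -> exists b', is_succ_of b' beta /\
            nf (tadd_small alpha b') /\ xi = tsucc (tadd_small alpha b') /\
            theta 0 = Th (tadd_small alpha b')).
  { intro Hs. destruct (tpred_spec Hs) as [Hnp Ep].
    destruct (tadd_small_tsucc_inv Hmul Hnp Ep) as [b' [Hb' Eb']].
    exists b'. rewrite <- Eb'. split; [exact Hb'|split; [exact Hnp|split; [exact Ep|]]].
    change (ThetaStar Th xi = Th (tpred xi)). unfold ThetaStar.
    case_dec (tsuccessor xi) Hs'; tauto. }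
  destruct Hjump as [H|[H|H]].
  - exfalso. refine (tadd_small_neq_TZ beta _ H). intros E. rewrite E in Htau. discriminate.
  - left. exact (Hsucc H).
  - destruct (classic (tsuccessor xi)) as [Hs|Hs]; [left; exact (Hsucc Hs)|right].
    split; [exact H|split]; pose proof H as (_ & _ & Hemb & _).
    + intros Eb. rewrite Eb, tadd_small_0, Htau in Hemb. exact (emb_neq_tOmega _ Hemb).
    + change (ThetaStar Th xi = star xi). unfold ThetaStar.
      case_dec (tsuccessor xi) Hs'; [contradiction|].
      case_dec (FIX Th xi) HF'; [|contradiction]. rewrite <- Hemb. apply toO_emb.
Qed.

Lemma theta_seq_lt_S (n : nat) : theta n <o theta (S n).
Proof.
  simpl. apply (olt_of_star_fs_lt Hna Htau). exact (star_lt_Theta (nf_fs _ Hna Htau)).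
Qed.

Lemma theta_seq_lt_Theta (n : nat) : theta n <o Th xi.
Proof.
  induction n as [|n IH].
  - destruct theta_seq_0_cases as [(b' & _ & Hnb & Exi & ->)|(_ & _ & ->)].
    + apply Theta_lt; [exact Hnxi|exact Hnb| |].
      * rewrite Exi. apply tlt_tsucc.
      * apply star_tsucc_lt. rewrite <- Exi. exact (star_lt_Theta Hnxi).
    + exact (star_lt_Theta Hnxi).
  - simpl. apply Theta_lt; [exact Hnxi|exact (nf_fs _ Hna Htau)| |].
    + apply tlt_tadd_small_r, fs_lt; assumption.
    + apply star_fs_lt; [exact Hna|exact Htau| |exact IH].
      exact (proj1 (proj1 (star_tadd_small_lt _ _ _) (star_lt_Theta Hnxi))).
Qed.

Lemma star_lt_of_theta_seq_0_lt {l : O} : theta 0 <o l -> star xi <o l.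
Proof.
  intro Hl.
  destruct theta_seq_0_cases as [(b' & Hb' & Hnb & _ & E0)|(_ & _ & E0)];
    rewrite E0 in Hl; [|exact Hl].
  destruct (proj1 (star_tadd_small_lt _ _ _) (star_lt_Theta Hnb)) as [Ha Hb].
  apply star_tadd_small_lt. split.
  - exact (olt_trans W _ _ _ Ha Hl).
  - exact (ole_lt_trans (proj2 Hb' _ Hb) Hl).
Qed.

Lemma Theta_tadd_small_le_theta_seq_0 {g : O} :
  g <o beta -> nf (tadd_small alpha g) -> ole (Th (tadd_small alpha g)) (theta 0).
Proof.
  intros Hg Hng.
  destruct theta_seq_0_cases as [(b' & Hb' & Hnb & _ & ->)|(HF & Hb & ->)].
  - destruct (is_succ_of_le Hb' Hg) as [Hlt| ->]; [left|right; reflexivity].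
    apply Theta_lt; [exact Hnb|exact Hng|exact (tadd_small_lt _ Hlt)|].
    destruct (proj1 (star_tadd_small_lt _ _ _) (star_lt_Theta Hnb)) as [Ha Hb].
    apply star_tadd_small_lt. split; [exact Ha|exact (olt_trans W _ _ _ Hlt Hb)].
  - destruct HF as (_ & Hs1 & Hemb & gg & Hgg & Hxg & Htg).
    assert (Eg : star xi = Th gg) by (apply emb_inj; congruence).
    left. rewrite Eg. apply Theta_lt; [exact Hgg|exact Hng|exact (tlt_trans (tadd_small_lt _ Hg) Hxg)|].
    rewrite <- Eg. apply star_tadd_small_lt. split.
    + (* alpha^* <= (xi[1])^* < xi^* *)
      destruct (fs_tadd_small alpha oone Hb) as [d Hd]. rewrite Hd in Hs1.
      exact (proj1 (proj1 (star_tadd_small_lt _ _ _) Hs1)).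
    + apply (olt_le_trans Hg), not_olt_ole. intro H.
      exact (olt_irrefl W _ (proj2 (proj1 (star_tadd_small_lt _ _ _) H))).
Qed.

Lemma Theta_lt_theta_seq {z : tm O} {n : nat} :
  nf z -> tlt z alpha -> star z <o theta n -> Th z <o theta (S n).
Proof.
  intros Hz Hza Hzs. simpl.
  apply Theta_lt; [exact (nf_fs _ Hna Htau)|exact Hz|exact (fs_cofinal Hna Htau Hz Hza Hzs)|].
  exact (olt_trans W _ _ _ Hzs (theta_seq_lt_S n)).
Qed.

Lemma Theta_le_of_cofinal {l : O} :
  (forall n, theta n <o l) -> (forall z, z <o l -> exists n, z <o theta n) -> ole (Th xi) l.
Proof.
  intros Hlt Hcof. apply (Theta_le Hnxi). split; [|split].
  - apply (club_sup (f := fun n => theta (S n)) Hclub).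
    + intro n. exact (X_Theta (nf_fs _ Hna Htau)).
    + intro n. exact (Hlt (S n)).
    + intros z Hz. destruct (Hcof z Hz) as [n Hn].
      exists n. exact (olt_trans W _ _ _ Hn (theta_seq_lt_S n)).
  - exact (star_lt_of_theta_seq_0_lt (Hlt 0)).
  - intros z Hz Hzx Hzs.
    destruct (classic (tlt z alpha)) as [Hza|Hza].
    + destruct (Hcof _ Hzs) as [n Hn].
      exact (olt_trans W _ _ _ (Theta_lt_theta_seq Hz Hza Hn) (Hlt (S n))).
    + destruct (tlt_tadd_small_inv Hz Hzx Hza) as [g [Hg ->]].
      exact (ole_lt_trans (Theta_tadd_small_le_theta_seq_0 Hg Hz) (Hlt 0)).
Qed.

End ThetaSequence.

Theorem lemma4p7 (W : Omega1) (X : W -> Prop) (Th : tm W -> W) :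
  club X -> ~ X (ozero W) -> is_Theta X Th ->
  forall (alpha alphat : tm W) (beta : W),
    nf alphat -> alphat <> TZ -> alpha = tOmul alphat ->
    epshat Th (tadd_small alpha beta) -> JUMP Th (tadd_small alpha beta) ->
    tau alpha = @tOmega W ->
    (forall n, olt W (theta_seq Th alpha beta n) (theta_seq Th alpha beta (S n))) /\
    (forall n, ole (theta_seq Th alpha beta n) (Th (tadd_small alpha beta))) /\
    (forall y : W, (forall n, ole (theta_seq Th alpha beta n) y) ->
       ole (Th (tadd_small alpha beta)) y).
Proof.
  intros Hclub _ HTh alpha alphat beta _ _ Ealpha [Hnxi _] Hjump Htau.
  assert (Hna : nf alpha) by exact (nf_tadd_small_inv Hnxi).
  assert (Hmul : Omega_multiple alpha) by (rewrite Ealpha; apply Omega_multiple_tOmul).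
  assert (Hinc : forall n, olt W (theta_seq Th alpha beta n) (theta_seq Th alpha beta (S n)))
    by (intro n; exact (theta_seq_lt_S HTh Hna Htau n)).
  split; [exact Hinc|split].
  - intro n. left. exact (theta_seq_lt_Theta HTh Hna Hmul Htau Hnxi Hjump n).
  - intros y Hy. destruct (olub_exists Hy) as (l & Hub & Hly & Hcof).
    refine (ole_trans (Theta_le_of_cofinal HTh Hclub Hna Hmul Htau Hnxi Hjump _ Hcof) Hly).
    intro n. exact (olt_le_trans (Hinc n) (Hub (S n))).
Qed.
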